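(* Let $p$ be a prime, $K\in\{\mathbb Z_{(p)},\mathbb Z_p\}$, $G=\langle a\rangle\cong C_{p^2}$, $H=\langle a^p\rangle$, $\Phi(x)=x^{p-1}+\dots+x+1$, and for $0\leq i\leq p-2$ let $X_i$ be the $KC_{p^2}$-submodule of $KC_{p^2}$ generated by $(a-1)\Phi(a^p)$ and $\Phi(a)+(a-1)^{i+1}$. Put $u=\Phi(a)\Phi(a^p)\in X_i$. Then the restriction of $X_i$ to $KH$ is a direct sum of two $KH$-submodules, one of which is $Ku$. *)

(* Definitions for Lemma 7:
   - Zloc p   : the localization Z_(p) (subring of rat)
   - Zpadic p : the p-adic integers Z_p (inverse limit of Z/p^n Z)
   - cgring K N : the group ring K[C_{N+1}] of the cyclic group of order N+1,
                  with the group realized as Z/(N+1)Z = 'I_N.+1 (additive),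
                  generator a = the basis element at 1.                     *)
From HB Require Import structures.
From mathcomp Require Import all_boot all_order all_algebra.
From mathcomp Require Import boolp.
Set Implicit Arguments. Unset Strict Implicit. Unset Printing Implicit Defensive.
Import Order.TTheory GRing.Theory Num.Theory.
Local Open Scope ring_scope.

Section Zloc.
Variable p : nat.
Definition zloc_pred : {pred rat} :=
  fun x => `[< exists d : nat, coprime d p /\ (d%:R * x \is a Num.int) >].
Fact zloc_subring : subring_closed zloc_pred.
Proof.
split.
- apply/asboolP; exists 1%N; split; first exact: coprime1n.
  by rewrite mulr1.
- move=> x y /asboolP[d [cd xi]] /asboolP[e [ce yi]]; apply/asboolP.
  exists (d * e)%N; split; first by rewrite coprimeMl cd ce.
  rewrite natrM mulrBr; apply: rpredB.
  + rewrite mulrAC; apply: rpredM => //; apply/intrP; eexists; rewrite pmulrn; reflexivity.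
  + rewrite -mulrA; apply: rpredM => //; apply/intrP; eexists; rewrite pmulrn; reflexivity.
- move=> x y /asboolP[d [cd xi]] /asboolP[e [ce yi]]; apply/asboolP.
  exists (d * e)%N; split; first by rewrite coprimeMl cd ce.
  by rewrite natrM mulrACA; apply: rpredM.
Qed.
HB.instance Definition _ := GRing.isSubringClosed.Build rat zloc_pred zloc_subring.
Record Zloc := MkZloc { zloc_val : rat; _ : zloc_val \in zloc_pred }.
HB.instance Definition _ := [isSub for zloc_val].
HB.instance Definition _ := [Choice of Zloc by <:].
HB.instance Definition _ := [SubChoice_isSubComNzRing of Zloc by <:].
End Zloc.

(* Z_p = inverse limit of Z/p^nZ: coherent sequences (x_n)_n with      *)
(* 0 <= x_n < p^n and x_n = x_{n+1} mod p^n; ring operations computed  *)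
(* componentwise mod p^n.  (The modulus base is maxn p 2, which is p    *)
(* for every prime p; this only avoids a degenerate ring for p < 2.)    *)
Section Zpadic.
Variable p : nat.
Definition zpq (n : nat) : int := ((maxn p 2) ^ n)%N.
Definition zp_coh (f : nat -> int) : Prop := forall n, f n = modz (f n.+1) (zpq n).
Record Zpadic := MkZpadic { zp_seq : nat -> int; _ : `[< zp_coh zp_seq >] }.
HB.instance Definition _ := [isSub for zp_seq].
HB.instance Definition _ := [Choice of Zpadic by <:].

Lemma modz_mulr_mod (m d k : int) : modz (modz m (d * k)) d = modz m d.
Proof.
rewrite {2}(divz_eq m (d * k)) mulrA mulrAC modzMDl //.
Qed.

Lemma zpqS n : zpq n.+1 = zpq n * (maxn p 2)%:Z.
Proof. by rewrite /zpq expnSr PoszM. Qed.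

Lemma zp_mkP (g : nat -> int) :
  (forall n, (g n.+1 = g n %[mod zpq n])%Z) -> `[< zp_coh (fun n => modz (g n) (zpq n)) >].
Proof.
move=> H; apply/asboolP => n /=.
by rewrite zpqS modz_mulr_mod H.
Qed.

Definition zp_mk g H := MkZpadic (@zp_mkP g H).

Lemma zp_cohE (x : Zpadic) n : (zp_seq x n.+1 = zp_seq x n %[mod zpq n])%Z.
Proof. by case: x => f /asboolP H /=; rewrite (H n) modz_mod. Qed.

Lemma zp_red (x : Zpadic) n : modz (zp_seq x n) (zpq n) = zp_seq x n.
Proof. by case: x => f /asboolP H /=; rewrite (H n) modz_mod. Qed.

Lemma zp_addP (x y : Zpadic) n :
  ((zp_seq x n.+1 + zp_seq y n.+1) = (zp_seq x n + zp_seq y n) %[mod zpq n])%Z.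
Proof. by rewrite -modzDm !zp_cohE modzDm. Qed.
Lemma zp_mulP (x y : Zpadic) n :
  ((zp_seq x n.+1 * zp_seq y n.+1) = (zp_seq x n * zp_seq y n) %[mod zpq n])%Z.
Proof. by rewrite -modzMm !zp_cohE modzMm. Qed.
Lemma zp_oppP (x : Zpadic) n :
  (- zp_seq x n.+1 = - zp_seq x n %[mod zpq n])%Z.
Proof. by rewrite -modzNm zp_cohE modzNm. Qed.
Lemma zp_cstP (c : int) n : (c = c %[mod zpq n])%Z.
Proof. by []. Qed.

Definition zp_add x y := zp_mk (zp_addP x y).
Definition zp_mul x y := zp_mk (zp_mulP x y).
Definition zp_opp x := zp_mk (zp_oppP x).
Definition zp_cst c := zp_mk (zp_cstP c).

Lemma zp_eq (x y : Zpadic) : (forall n, zp_seq x n = zp_seq y n) -> x = y.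
Proof. by move=> H; apply: val_inj; apply: funext. Qed.

Lemma zp_addA : associative zp_add.
Proof. by move=> x y z; apply: zp_eq => n /=; rewrite modzDml modzDmr addrA. Qed.
Lemma zp_addC : commutative zp_add.
Proof. by move=> x y; apply: zp_eq => n /=; rewrite addrC. Qed.
Lemma zp_add0 : left_id (zp_cst 0) zp_add.
Proof. by move=> x; apply: zp_eq => n /=; rewrite mod0z add0r zp_red. Qed.
Lemma zp_addN : left_inverse (zp_cst 0) zp_opp zp_add.
Proof. by move=> x; apply: zp_eq => n /=; rewrite modzDml addNr mod0z. Qed.

HB.instance Definition _ := GRing.isZmodule.Build Zpadic zp_addA zp_addC zp_add0 zp_addN.

Lemma zp_mulA : associative zp_mul.
Proof. by move=> x y z; apply: zp_eq => n /=; rewrite modzMml modzMmr mulrA. Qed.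
Lemma zp_mulC : commutative zp_mul.
Proof. by move=> x y; apply: zp_eq => n /=; rewrite mulrC. Qed.
Lemma zp_mul1 : left_id (zp_cst 1) zp_mul.
Proof. by move=> x; apply: zp_eq => n /=; rewrite modzMml mul1r zp_red. Qed.
Lemma zp_mulDl : left_distributive zp_mul zp_add.
Proof. by move=> x y z; apply: zp_eq => n /=; rewrite modzMml modzDm mulrDl. Qed.
Lemma zp_1n0 : zp_cst 1 != 0.
Proof.
apply/eqP => /(congr1 (fun x => zp_seq x 1%N)) /=.
rewrite /zpq expn1 mod0z modz_nat /= modn_small //.
by rewrite (leq_trans _ (leq_maxr p 2)).
Qed.

HB.instance Definition _ := GRing.Zmodule_isComNzRing.Build Zpadic
  zp_mulA zp_mulC zp_mul1 zp_mulDl zp_1n0.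
End Zpadic.

Section CGring.
Variables (K : comNzRingType) (N : nat).
Definition cgring : Type := {ffun 'I_N.+1 -> K}.
HB.instance Definition _ := GRing.Zmodule.copy cgring {ffun 'I_N.+1 -> K}.

Definition cg_scale (c : K) (f : cgring) : cgring := [ffun k => c * f k].
Lemma cg_scaleA a b v : cg_scale a (cg_scale b v) = cg_scale (a * b) v.
Proof. by apply/ffunP => k; rewrite !ffunE mulrA. Qed.
Lemma cg_scale1 : left_id 1 cg_scale.
Proof. by move=> v; apply/ffunP => k; rewrite !ffunE mul1r. Qed.
Lemma cg_scaleDr : right_distributive cg_scale +%R.
Proof. by move=> a u v; apply/ffunP => k; rewrite !ffunE mulrDr. Qed.
Lemma cg_scaleDl v : {morph cg_scale^~ v : a b / a + b}.
Proof. by move=> a b; apply/ffunP => k; rewrite !ffunE mulrDl. Qed.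
HB.instance Definition _ := GRing.Zmodule_isLmodule.Build K cgring
  cg_scaleA cg_scale1 cg_scaleDr cg_scaleDl.

Definition cg_one : cgring := [ffun k => (k == 0)%:R].
Definition cg_mul (f g : cgring) : cgring :=
  [ffun k => \sum_(i : 'I_N.+1) f i * g (k - i)].

Lemma cg_mulC : commutative cg_mul.
Proof.
move=> f g; apply/ffunP => k; rewrite !ffunE.
rewrite (reindex_inj (subrI k)) /=; apply: eq_bigr => i _.
by rewrite subKr mulrC.
Qed.
Lemma cg_mulA : associative cg_mul.
Proof.
move=> f g h; apply/ffunP => k; rewrite !ffunE.
under eq_bigr do rewrite ffunE big_distrr.
under [RHS]eq_bigr do rewrite ffunE big_distrl.
rewrite [RHS]exchange_big /=; apply: eq_bigr => i _.
rewrite [RHS](reindex_inj (addIr i)) /=; apply: eq_bigr => j _.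
by rewrite addrK mulrA opprD addrA [k - j - i]addrAC.
Qed.
Lemma cg_mul1 : left_id cg_one cg_mul.
Proof.
move=> f; apply/ffunP => k; rewrite !ffunE (bigD1 0) //= big1 => [|i /negbTE Hi].
  by rewrite ffunE eqxx mul1r subr0 addr0.
by rewrite ffunE Hi mul0r.
Qed.
Lemma cg_mulDl : left_distributive cg_mul +%R.
Proof.
move=> f g h; apply/ffunP => k; rewrite !ffunE -big_split /=.
by apply: eq_bigr => i _; rewrite ffunE mulrDl.
Qed.
Lemma cg_one_neq0 : cg_one != 0.
Proof. by apply/eqP => /ffunP /(_ 0); rewrite !ffunE eqxx; apply/eqP; exact: oner_neq0. Qed.
HB.instance Definition _ := GRing.Zmodule_isComNzRing.Build cgring
  cg_mulA cg_mulC cg_mul1 cg_mulDl cg_one_neq0.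
End CGring.

Section CGringDefs.
Variables (K : comNzRingType) (N : nat).

Definition cg_gen : cgring K N := [ffun k : 'I_N.+1 => ((k : nat) == 1%N)%:R].

Definition Phi (R : pzSemiRingType) (p : nat) (x : R) : R := \sum_(j < p) x ^+ j.

Definition gen_submod2 (g1 g2 : cgring K N) : cgring K N -> Prop :=
  fun x => exists r1 r2 : cgring K N, x = r1 * g1 + r2 * g2.

Definition in_KH (p : nat) (h : cgring K N) : Prop :=
  exists c : 'I_p -> K, h = \sum_(j < p) c j *: (cg_gen ^+ p) ^+ j.

Definition KH_submodule (p : nat) (Y : cgring K N -> Prop) : Prop :=
  [/\ Y 0,
      (forall x y, Y x -> Y y -> Y (x + y)),
      (forall (c : K) x, Y x -> Y (c *: x)) &
      (forall h x, in_KH p h -> Y x -> Y (h * x))].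
End CGringDefs.

(* Let lam be the linear form x |-> sum_k x_k w(k) on K C_{p^2}, with integer weights
   w(k) = 1 + sum_{l<p} C(l, n) - p C(k mod p, n), where n = i + 1.  Since w only depends
   on k mod p, lam (a^p x) = lam x, so ker lam is a KH-submodule.  One computes
   lam u = p^2, and lam maps X into p^2 K: on (a-1)Phi(a^p) because w is constant mod p,
   and on Phi(a) + (a-1)^n because the n-th finite difference of e |-> C(e mod p, n)
   is 1 mod p.  As p is not a zero divisor in K, X = Ku + (X /\ ker lam) is direct. *)

From HB Require Import structures.
From mathcomp Require Import all_boot all_order all_algebra.
From mathcomp Require Import boolp.
From mathcomp Require Import ring zify.
Set Implicit Arguments.
Unset Strict Implicit.
Unset Printing Implicit Defensive.

Import Order.TTheory GRing.Theory Num.Theory.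
Local Open Scope ring_scope.

Section GroupRing.
Variables (K : comNzRingType) (N : nat).
Local Notation G := (cgring K N).
Local Notation a := (cg_gen K N).

Lemma cgring_mulE (x y : G) k : (x * y) k = \sum_j x j * y (k - j).
Proof. by rewrite /GRing.mul /= ffunE. Qed.

Lemma cgring_scaleE c (x : G) k : (c *: x) k = c * x k.
Proof. by rewrite /GRing.scale /= ffunE. Qed.

Lemma cgring_scalerAl c (x y : G) : c *: (x * y) = (c *: x) * y.
Proof.
apply/ffunP => k; rewrite cgring_scaleE !cgring_mulE big_distrr.
by apply: eq_bigr => j _; rewrite cgring_scaleE /= mulrA.
Qed.

HB.instance Definition _ := GRing.Lmodule_isLalgebra.Build K G cgring_scalerAl.
HB.instance Definition _ := GRing.Lalgebra_isComAlgebra.Build K G.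

Definition cg_delta (o : 'I_N.+1) : G := [ffun k => (k == o)%:R].

Lemma cg_deltaM o o' : cg_delta o * cg_delta o' = cg_delta (o + o').
Proof.
apply/ffunP => k; rewrite cgring_mulE (bigD1 o) //= !ffunE eqxx mul1r big1 ?addr0.
  by rewrite subr_eq addrC.
by move=> j /negbTE hj; rewrite ffunE hj mul0r.
Qed.

Lemma cgring_delta_expansion (x : G) : x = \sum_k x k *: cg_delta k.
Proof.
apply/ffunP => k; rewrite sum_ffunE (bigD1 k) //= cgring_scaleE ffunE eqxx mulr1.
rewrite big1 ?addr0 // => j hj.
by rewrite cgring_scaleE ffunE eq_sym (negbTE hj) mulr0.
Qed.

Hypothesis N_gt0 : (0 < N)%N.

Lemma cg_gen_exp e : a ^+ e = cg_delta (inZp e).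
Proof.
have a_delta : a = cg_delta (inZp 1).
  apply/ffunP => k; rewrite !ffunE; congr (_%:R).
  by rewrite -val_eqE /= modn_small.
elim: e => [|e IH]; first by apply/ffunP => k; rewrite !ffunE.
rewrite exprSr IH a_delta cg_deltaM; congr cg_delta.
by apply: val_inj; rewrite /= modnDm addn1.
Qed.

Lemma cg_gen_exp_order : a ^+ N.+1 = 1.
Proof.
rewrite cg_gen_exp; apply/ffunP => k; rewrite !ffunE; congr (_%:R).
by congr (_ == _); apply: val_inj; rewrite /= modnn.
Qed.

Lemma cgring_expansion (x : G) : x = \sum_k x k *: a ^+ k.
Proof.
rewrite {1}(cgring_delta_expansion x); apply: eq_bigr => k _.
by rewrite cg_gen_exp valZpK.
Qed.

Section GeneratedSubmodule.
Variables g1 g2 : G.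
Local Notation X := (gen_submod2 g1 g2).

Lemma gen_submod2_0 : X 0.
Proof. by exists 0, 0; rewrite !mul0r addr0. Qed.

Lemma gen_submod2_add x y : X x -> X y -> X (x + y).
Proof. by case=> r1 [r2 ->] [s1 [s2 ->]]; exists (r1 + s1), (r2 + s2); ring. Qed.

Lemma gen_submod2_mul h x : X x -> X (h * x).
Proof. by case=> r1 [r2 ->]; exists (h * r1), (h * r2); ring. Qed.

Lemma gen_submod2_scale c x : X x -> X (c *: x).
Proof. by move=> Xx; rewrite -mulr_algl; apply: gen_submod2_mul. Qed.
End GeneratedSubmodule.

Definition cg_weight (w : nat -> K) (x : G) : K := \sum_k x k * w k.

Lemma cg_weight_is_linear w : linear_for *%R (cg_weight w).
Proof.
move=> c x y; rewrite /cg_weight mulr_sumr -big_split; apply: eq_bigr => k _ /=.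
by rewrite !ffunE mulrDl mulrA.
Qed.

HB.instance Definition _ w :=
  GRing.isLinear.Build K G K *%R (cg_weight w) (cg_weight_is_linear w).

Lemma cg_weight_delta w o : cg_weight w (cg_delta o) = w o.
Proof.
rewrite /cg_weight (bigD1 o) //= ffunE eqxx mul1r big1 ?addr0 // => j /negbTE hj.
by rewrite ffunE hj mul0r.
Qed.

Section PeriodicWeight.
Variables (p : nat) (w : nat -> K).
Hypothesis p_dvd : (p %| N.+1)%N.
Hypothesis w_mod : forall e, w (e %% p)%N = w e.
Local Notation lam := (cg_weight w).

Lemma cg_weight_exp e : lam (a ^+ e) = w e.
Proof. by rewrite cg_gen_exp cg_weight_delta /= -w_mod modn_dvdm // w_mod. Qed.

Lemma cg_weight_exp_mul m x : lam (a ^+ m * x) = \sum_k x k * w (m + k)%N.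
Proof.
rewrite {1}(cgring_expansion x) mulr_sumr linear_sum; apply: eq_bigr => k _.
by rewrite -scalerAr linearZ /= -exprD cg_weight_exp.
Qed.

Lemma cg_weight_subgroup_invariant j x : lam ((a ^+ p) ^+ j * x) = lam x.
Proof.
rewrite -exprM cg_weight_exp_mul; apply: eq_bigr => k _.
by rewrite -w_mod mulnC modnMDl w_mod.
Qed.

Lemma cg_weight_Phi_mul x : lam (Phi p (a ^+ p) * x) = lam x *+ p.
Proof.
rewrite /Phi mulr_suml linear_sum -[in RHS](card_ord p) -sumr_const.
by apply: eq_bigr => j _; exact: cg_weight_subgroup_invariant.
Qed.

Lemma cg_weight_ideal_dvd (d : K) g :
    (forall m, exists q, lam (a ^+ m * g) = d * q) ->
  forall r, exists q, lam (r * g) = d * q.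
Proof.
move=> dvd_g r; have [q qP] := choice dvd_g.
exists (\sum_k r k * q k); rewrite {1}(cgring_expansion r) mulr_suml linear_sum mulr_sumr.
by apply: eq_bigr => k _; rewrite -scalerAl linearZ /= qP mulrCA.
Qed.

Lemma in_KH_action h : in_KH p h ->
  exists s, (forall x, lam (h * x) = s * lam x) /\
            (forall y, a ^+ p * y = y -> h * y = s *: y).
Proof.
case=> c ->; exists (\sum_j c j); split=> [x | y fix_y].
  rewrite mulr_suml linear_sum mulr_suml; apply: eq_bigr => j _.
  by rewrite -scalerAl linearZ /= cg_weight_subgroup_invariant.
have fix_pow j : (a ^+ p) ^+ j * y = y.
  by elim: j => [|j IH]; rewrite ?mul1r // exprSr -mulrA fix_y.
rewrite mulr_suml scaler_suml; apply: eq_bigr => j _.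
by rewrite -scalerAl fix_pow.
Qed.

Section Splitting.
Variables (g1 g2 u : G) (d : K).
Local Notation X := (gen_submod2 g1 g2).
Hypotheses (Xu : X u) (u_fixed : a ^+ p * u = u) (lam_u : lam u = d).
Hypothesis d_reg : forall c, d * c = 0 -> c = 0.
Hypothesis lam_g1 : forall m, exists q, lam (a ^+ m * g1) = d * q.
Hypothesis lam_g2 : forall m, exists q, lam (a ^+ m * g2) = d * q.

Lemma cg_weight_gen_submod2_dvd x : X x -> exists q, lam x = d * q.
Proof.
case=> r1 [r2 ->]; rewrite linearD /=.
have [q1 ->] := cg_weight_ideal_dvd lam_g1 r1.
have [q2 ->] := cg_weight_ideal_dvd lam_g2 r2.
by exists (q1 + q2); rewrite mulrDr.
Qed.

Lemma gen_submod2_split :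
  let Ku := fun x => exists c : K, x = c *: u in
  exists Y : G -> Prop,
    [/\ KH_submodule p Ku, KH_submodule p Y,
        (forall y, Y y -> X y),
        (forall x, X x -> exists c y, Y y /\ x = c *: u + y) &
        (forall x, Ku x -> Y x -> x = 0)].
Proof.
move=> Ku; exists (fun x => X x /\ lam x = 0); split.
- split.
  + by exists 0; rewrite scale0r.
  + by move=> _ _ [c ->] [c' ->]; exists (c + c'); rewrite scalerDl.
  + by move=> c _ [c' ->]; exists (c * c'); rewrite scalerA.
  + move=> h _ /in_KH_action[s [_ hu]] [c ->].
    by exists (s * c); rewrite -scalerAr hu // scalerA mulrC.
- split.
  + by split; [exact: gen_submod2_0 | exact: linear0].
  + move=> x y [Xx lx] [Xy ly].
    by split; [exact: gen_submod2_add | rewrite linearD /= lx ly addr0].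
  + move=> c x [Xx lx].
    by split; [exact: gen_submod2_scale | rewrite linearZ /= lx mulr0].
  + move=> h x /in_KH_action[s [hl _]] [Xx lx].
    by split; [exact: gen_submod2_mul | rewrite hl lx mulr0].
- by move=> y [].
- move=> x Xx; have [c lx] := cg_weight_gen_submod2_dvd Xx.
  exists c, (x - c *: u); split; last by rewrite addrC subrK.
  split; first by rewrite -scaleNr; apply: gen_submod2_add => //; exact: gen_submod2_scale.
  by rewrite linearB linearZ /= lx lam_u mulrC subrr.
- move=> _ [c ->] [_]; rewrite linearZ /= lam_u mulrC => /d_reg ->.
  by rewrite scale0r.
Qed.
End Splitting.
End PeriodicWeight.
End GroupRing.

Lemma coef_X1_exp (R : nzRingType) j k : (('X + 1 : {poly R}) ^+ j)`_k = 'C(j, k)%:R.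
Proof.
elim: j k => [|j IH] k; first by rewrite expr0 coef1 bin0n; case: k.
rewrite exprSr mulrDr mulr1 coefD coefMX; case: k => [|k] /=; rewrite !IH.
  by rewrite add0r !bin0.
by rewrite binS natrD addrC.
Qed.

Lemma X1_exp_diff (R : comNzRingType) m n :
  \sum_(j < n.+1) ((-1) ^+ j *: ('X + 1 : {poly R}) ^+ (m + (n - j))) *+ 'C(n, j)
    = ('X + 1) ^+ m * 'X^n.
Proof.
have -> : 'X^n = (('X + 1) - 1 : {poly R}) ^+ n by rewrite addrK.
rewrite exprBn mulr_sumr; apply: eq_bigr => j _.
by rewrite expr1n /= mulr1 mulrnAr exprD -mul_polyC rmorphXn rmorphN1 mulrCA.
Qed.

Section BinomialsModP.
Variable p : nat.
Hypothesis p_pr : prime p.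

Lemma X1_exp_pchar : ('X + 1 : {poly 'F_p}) ^+ p = 'X^p + 1.
Proof. by rewrite exprDn_pchar ?expr1n // pnatE // pchar_poly pchar_Fp. Qed.

Lemma coef_X1_exp_mod j k : (k < p)%N ->
  (('X + 1 : {poly 'F_p}) ^+ j)`_k = 'C(j %% p, k)%:R.
Proof.
move=> lt_kp; rewrite {1}(divn_eq j p) exprD mulnC exprM X1_exp_pchar mulrC.
rewrite -coef_X1_exp.
elim: (j %/ p)%N => [|q IH]; first by rewrite expr0 mulr1.
by rewrite exprSr mulrA mulrDr mulr1 coefD coefMXn lt_kp add0r IH.
Qed.

(* Over F_p the binomial coefficient C(e mod p, k) is the coefficient of X^k in (X+1)^e,
   so the n-th finite difference below is the coefficient of X^n in (X+1)^m X^n. *)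
Lemma binomial_mod_diff_cong n m : (n < p)%N ->
  (p %| \sum_(j < n.+1) ((-1) ^+ j * 'C((m + (n - j)) %% p, n)%:Z) *+ 'C(n, j) - 1)%Z.
Proof.
move=> lt_np; rewrite (dvdz_pcharf (pchar_Fp p_pr)) rmorphB rmorph1 /= rmorph_sum subr_eq0.
have <- : (('X + 1 : {poly 'F_p}) ^+ m * 'X^n)`_n = 1.
  by rewrite coefMXn ltnn subnn coef_X1_exp bin0.
rewrite -X1_exp_diff coef_sum; apply/eqP/eq_bigr => j _.
rewrite coefMn coefZ coef_X1_exp_mod // rmorphMn rmorphM /= rmorphXn rmorphN1.
by rewrite -pmulrn.
Qed.
End BinomialsModP.

Lemma sum_shift_periodic (V : zmodType) (p : nat) (f : nat -> V) m :
  (forall e, f (e + p)%N = f e) -> \sum_(l < p) f (m + l)%N = \sum_(l < p) f l.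
Proof.
move=> f_per; elim: m => [|m <-] //; case: p f_per => [|q] f_per; first by rewrite !big_ord0.
rewrite big_ord_recr [RHS]big_ord_recl /= addn0 addrC addSnnS f_per.
by congr (_ + _); apply: eq_bigr => l _; rewrite /bump /= add1n addSnnS.
Qed.

Section BinomialWeight.
Variables (p n : nat).
Hypotheses (p_pr : prime p) (n_gt0 : (0 < n)%N) (n_lt_p : (n < p)%N).

Definition binom_weight (e : nat) : int :=
  1 + \sum_(l < p) 'C(l, n)%:Z - p%:Z * 'C(e %% p, n)%:Z.
Local Notation w := binom_weight.

Lemma binom_weight_mod e : w (e %% p) = w e.
Proof. by rewrite /w modn_mod. Qed.

Lemma sum_binom_weight m : \sum_(l < p) w (m + l)%N = p%:Z.
Proof.
rewrite sum_shift_periodic => [|e]; last by rewrite -binom_weight_mod modnDr binom_weight_mod.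
rewrite /w sumrB sumr_const card_ord -mulr_sumr.
under [X in _ - _ * X]eq_bigr => l _ do rewrite modn_small //.
by rewrite -[_ *+ p]mulr_natl -natz; ring.
Qed.

Lemma binom_weight_succ_dvd m : ((p ^ 2)%N%:Z %| (w m.+1 - w m) *+ p)%Z.
Proof.
apply/dvdzP; exists ('C(m %% p, n)%:Z - 'C(m.+1 %% p, n)%:Z).
by rewrite /w -mulr_natr -[(p ^ 2)%N]mulnn PoszM natz; ring.
Qed.

Lemma binom_weight_dvd m :
  ((p ^ 2)%N%:Z %| \sum_(l < p) w (m + l)%N +
     \sum_(j < n.+1) ((-1) ^+ j * w (m + (n - j))%N) *+ 'C(n, j))%Z.
Proof.
have [q TTE] := dvdzP (binomial_mod_diff_cong p_pr m n_lt_p).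
have alt_binom : \sum_(j < n.+1) (-1) ^+ j *+ 'C(n, j) = 0 :> int.
  transitivity ((1 - 1 : int) ^+ n); last by rewrite subrr expr0n gtn_eqF.
  by rewrite exprBn; apply: eq_bigr => j _; rewrite !expr1n !mulr1.
have termE (j : 'I_n.+1) : ((-1) ^+ j * w (m + (n - j))%N) *+ 'C(n, j) =
    (1 + \sum_(l < p) 'C(l, n)%:Z) * ((-1) ^+ j *+ 'C(n, j))
    - p%:Z * (((-1) ^+ j * 'C((m + (n - j)) %% p, n)%:Z) *+ 'C(n, j)).
  by rewrite /w; move: ((-1) ^+ j : int) 'C(n, j) => s k; ring.
rewrite (eq_bigr _ (fun j _ => termE j)).
rewrite sum_binom_weight sumrB -!mulr_sumr alt_binom (canRL (subrK 1) TTE).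
apply/dvdzP; exists (- q); rewrite -[(p ^ 2)%N]mulnn PoszM; ring.
Qed.
End BinomialWeight.

Lemma intr_dvdz (R : comPzRingType) (d z : int) :
  (d %| z)%Z -> exists q : R, z%:~R = d%:~R * q.
Proof. by case/dvdzP=> q ->; exists q%:~R; rewrite intrM mulrC. Qed.

Section Lemma7.
Variables (K : comNzRingType) (p i : nat).
Hypotheses (p_pr : prime p) (i_le : (i <= p - 2)%N).
Local Notation N := (p ^ 2).-1.
Local Notation n := i.+1.
Local Notation a := (cg_gen K N).
Let w (e : nat) : K := (binom_weight p n e)%:~R.
Local Notation lam := (@cg_weight K N w).
Local Notation u := (Phi p a * Phi p (a ^+ p)).
Local Notation g1 := ((a - 1) * Phi p (a ^+ p)).
Local Notation g2 := (Phi p a + (a - 1) ^+ n).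

Let p_gt1 : (1 < p)%N := prime_gt1 p_pr.
Let N_succ : N.+1 = (p ^ 2)%N. Proof. by rewrite prednK // expn_gt0 ltnW. Qed.
Let N_gt0 : (0 < N)%N.
Proof. by rewrite -ltnS N_succ (ltn_trans p_gt1) // -{1}(expn1 p) ltn_exp2l. Qed.
Let p_dvd : (p %| N.+1)%N. Proof. by rewrite N_succ dvdn_exp. Qed.
Let n_lt_p : (n < p)%N. Proof. by move: i_le p_gt1; clear; lia. Qed.
Let w_mod e : w (e %% p)%N = w e. Proof. by rewrite /w binom_weight_mod. Qed.

Let lam_exp e : lam (a ^+ e) = w e.
Proof. exact: (cg_weight_exp N_gt0 p_dvd w_mod). Qed.

Let lam_Phi_mul x : lam (Phi p (a ^+ p) * x) = lam x *+ p.
Proof. exact: (cg_weight_Phi_mul N_gt0 p_dvd w_mod). Qed.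

Let lam_dvd x z : lam x = z%:~R -> ((p ^ 2)%N%:Z %| z)%Z ->
  exists q, lam x = (p ^ 2)%:R * q.
Proof. by move=> -> /(intr_dvdz K)[q ->]; exists q; rewrite -pmulrn. Qed.

Lemma binom_weight_form_u : lam u = (p ^ 2)%:R.
Proof.
rewrite mulrC lam_Phi_mul /Phi linear_sum /=.
under eq_bigr do rewrite lam_exp /w.
by rewrite -rmorph_sum (sum_binom_weight p n 0) /= -pmulrn -mulrnA mulnn.
Qed.

Lemma binom_weight_form_g1 m : exists q, lam (a ^+ m * g1) = (p ^ 2)%:R * q.
Proof.
apply: (lam_dvd _ (binom_weight_succ_dvd p n m)).
have -> : a ^+ m * g1 = Phi p (a ^+ p) * (a ^+ m.+1 - a ^+ m).
  by rewrite mulrA mulrBr mulr1 -exprSr mulrC.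
by rewrite lam_Phi_mul linearB /= !lam_exp /w -rmorphB -rmorphMn.
Qed.

Lemma binom_weight_form_g2 m : exists q, lam (a ^+ m * g2) = (p ^ 2)%:R * q.
Proof.
apply: (lam_dvd _ (binom_weight_dvd p_pr (ltn0Sn i) n_lt_p m)).
rewrite mulrDr linearD /Phi exprBn !mulr_sumr !linear_sum /= rmorphD !rmorph_sum /=.
congr (_ + _); apply: eq_bigr => j _; first by rewrite -exprD lam_exp.
rewrite /= expr1n mulr1 mulrnAr raddfMn /= mulrCA raddfMsign /= -exprD lam_exp.
by rewrite rmorphMn rmorphM /= rmorph_sign.
Qed.

Lemma gen_exp_p_mul_u : a ^+ p * u = u.
Proof.
have a_order : a ^+ (p * p) = 1 by rewrite mulnn -N_succ cg_gen_exp_order.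
apply/eqP; rewrite -subr_eq0 -[X in _ - X]mul1r -mulrBl mulrCA /Phi -subrX1.
by rewrite -exprM a_order subrr mulr0.
Qed.

Lemma gen_submod2_u : gen_submod2 g1 g2 u.
Proof. by exists (- (a - 1) ^+ i), (Phi p (a ^+ p)); rewrite exprSr; ring. Qed.

Hypothesis p_reg : forall c : K, p%:R * c = 0 -> c = 0.

Lemma KH_restriction_split :
  let X := gen_submod2 g1 g2 in
  let Ku := fun x => exists c : K, x = c *: u in
  exists Y : cgring K N -> Prop,
    [/\ KH_submodule p Ku, KH_submodule p Y,
        (forall y, Y y -> X y),
        (forall x, X x -> exists c y, Y y /\ x = c *: u + y) &
        (forall x, Ku x -> Y x -> x = 0)].
Proof.
apply: (gen_submod2_split N_gt0 p_dvd w_mod gen_submod2_u gen_exp_p_mul_u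
  binom_weight_form_u _ binom_weight_form_g1 binom_weight_form_g2).
by move=> c; rewrite natrX expr2 -mulrA => /p_reg/p_reg.
Qed.
End Lemma7.

Lemma Zloc_natr_regular p (c : Zloc p) : prime p -> p%:R * c = 0 -> c = 0.
Proof.
move=> p_pr /(congr1 val); rewrite rmorphM rmorph_nat /= => /eqP.
by rewrite mulf_eq0 pnatr_eq0 eqn0Ngt prime_gt0 //= => /eqP c0; apply: val_inj.
Qed.

Lemma zp_seq_mulrn p (x : Zpadic p) k n :
  zp_seq (x *+ k) n = ((zp_seq x n * k%:Z) %% zpq p n)%Z.
Proof.
elim: k => [|k IH]; first by rewrite mulr0n mulr0 mod0z /= mod0z.
rewrite mulrS /= IH modzDmr; congr (_ %% _)%Z.
by rewrite -addn1 PoszD mulrDr mulr1 addrC.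
Qed.

Lemma Zpadic_natr_regular p (c : Zpadic p) : prime p -> p%:R * c = 0 -> c = 0.
Proof.
move=> p_pr; rewrite mulr_natl => cp0; apply: zp_eq => n.
rewrite [RHS]/= mod0z -zp_red -zp_cohE; apply/dvdz_mod0P.
move: (congr1 (fun y => zp_seq y n.+1) cp0); rewrite zp_seq_mulrn /= mod0z => /dvdz_mod0P.
rewrite zpqS (maxn_idPl (prime_gt1 p_pr)) dvdz_mul2r //.
by rewrite eqz_nat -lt0n prime_gt0.
Qed.

Theorem lemma7 (p : nat) (hp : prime p) (K : comNzRingType)
  (hK : K = (Zloc p : comNzRingType) \/ K = (Zpadic p : comNzRingType))
  (i : nat) (hi : (i <= p - 2)%N) :
  let a : cgring K (p ^ 2).-1 := cg_gen K (p ^ 2).-1 in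
  let X := gen_submod2 ((a - 1) * Phi p (a ^+ p)) (Phi p a + (a - 1) ^+ i.+1) in
  let u := Phi p a * Phi p (a ^+ p) in
  let Ku := fun x => exists c : K, x = c *: u in
  X u /\
  exists Y : cgring K (p ^ 2).-1 -> Prop,
    [/\ KH_submodule p Ku, KH_submodule p Y,
        (forall y, Y y -> X y),
        (forall x, X x -> exists c y, Y y /\ x = c *: u + y) &
        (forall x, Ku x -> Y x -> x = 0)].
Proof.
have p_reg : forall c : K, p%:R * c = 0 -> c = 0.
  by case: hK => -> c; [exact: Zloc_natr_regular | exact: Zpadic_natr_regular].
split; [exact: gen_submod2_u | exact: KH_restriction_split].
Qed.
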